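(* Let $n \ge r \ge r^* \ge 1$ be integers, let $A_1,\dots,A_m \in \mathbb{R}^{n\times n}$ be symmetric matrices, and define the linear map $\mathcal{A}:\mathbb{R}^{n\times n}\to\mathbb{R}^m$ by $\mathcal{A}(M) = (\langle A_1,M\rangle,\dots,\langle A_m,M\rangle)^\top$, where $\langle A,B\rangle=\operatorname{tr}(A^\top B)$. Let $M^*\in\mathbb{R}^{n\times n}$ be a nonzero symmetric positive semidefinite matrix of rank $r^*$, let $b=\mathcal{A}(M^* )$, and consider \[ f(X) = \tfrac12\|\mathcal{A}(XX^\top)-b\|_2^2,\qquad X\in\mathbb{R}^{n\times r}. \] Assume $\mathcal{A}$ satisfies the RIP$_{r+r^*}$ property with constant $\delta\in[0,1)$. Let $\hat X\in\mathbb{R}^{n\times r}$ be a first-order critical point of $f$, i.e. $\nabla f(\hat X)=0$. If \[ \|\hat X\hat X^\top - M^*\|_F^2 > 2\,\frac{1+\delta}{1-\delta}\,\operatorname{tr}(M^* )\,\sigma_r(\hat X)^2, \] then $\hat X$ is not a second-order critical point of $f$; it is a strict saddle point, and the Hessian $\nabla^2 f(\hat X)$ has a strictly negative eigenvalue not larger than \[ 2(1+\delta)\sigma_r(\hat X)^2 - \frac{(1-\delta)\,\|\hat X\hat X^\top - M^*\|_F^2}{\operatorname{tr}(M^* )}. \]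
   Context: RIP: for a natural number $p$, $\mathcal{A}$ satisfies $\delta_p$-RIP (RIP$_p$ with constant $\delta$) if $(1-\delta)\|M\|_F^2 \le \|\mathcal{A}(M)\|_2^2 \le (1+\delta)\|M\|_F^2$ for all $M\in\mathbb{R}^{n\times n}$ with $\operatorname{rank}(M)\le p$. $\sigma_r(\hat X)$ denotes the $r$-th largest singular value of $\hat X$. The Hessian $\nabla^2 f(X)$ is regarded as the symmetric quadratic form $U\mapsto \nabla^2 f(X)[U,U]=\sum \frac{\partial^2 f}{\partial X_{ij}\partial X_{kl}}(X)U_{ij}U_{kl}$ on $\mathbb{R}^{n\times r}$ (with the Frobenius inner product), and its eigenvalues are those of this form. A second-order critical point is a point with zero gradient and positive semidefinite Hessian; a strict saddle is a first-order critical point whose Hessian has a strictly negative eigenvalue. *)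

From HB Require Import structures.
From mathcomp Require Import all_boot all_order all_algebra.
From mathcomp Require Import all_classical all_reals all_analysis.
From Stdlib Require Import ClassicalEpsilon.
Set Implicit Arguments. Unset Strict Implicit. Unset Printing Implicit Defensive.
Import Order.TTheory GRing.Theory Num.Theory.
Local Open Scope ring_scope.

Section Defs.
Variable R : realType.

Definition frob_inner (p q : nat) (A B : 'M[R]_(p, q)) : R := \tr (A^T *m B).
Definition frob_norm2 (p q : nat) (A : 'M[R]_(p, q)) : R := frob_inner A A.

Definition norm2sq (m : nat) (v : 'cV[R]_m) : R := \sum_(i < m) (v i 0) ^+ 2.

Definition meas_op (m n : nat) (As : 'I_m -> 'M[R]_n) (M : 'M[R]_n) : 'cV[R]_m :=
  \col_i frob_inner (As i) M.

Definition RIP (m n : nat) (As : 'I_m -> 'M[R]_n) (p : nat) (delta : R) : Prop :=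
  forall M : 'M[R]_n, (\rank M <= p)%N ->
    (1 - delta) * frob_norm2 M <= norm2sq (meas_op As M) /\
    norm2sq (meas_op As M) <= (1 + delta) * frob_norm2 M.

Definition sym_matrix (n : nat) (M : 'M[R]_n) : Prop := M^T = M.

Definition psd (n : nat) (M : 'M[R]_n) : Prop :=
  sym_matrix M /\ forall v : 'cV[R]_n, 0 <= (v^T *m M *m v) 0 0.

Definition fobj (m n r : nat) (As : 'I_m -> 'M[R]_n) (b : 'cV[R]_m)
  (X : 'M[R]_(n, r)) : R :=
  2^-1 * norm2sq (meas_op As (X *m X^T) - b).

Definition first_order_critical (n r : nat) (f : 'M[R]_(n, r) -> R)
  (X : 'M[R]_(n, r)) : Prop :=
  forall U : 'M[R]_(n, r), is_derive (0 : R) (1 : R) (fun t : R => f (X + t *: U)) 0.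

(* Hessian as the sym_matrix bilinear form
   (U,V) |-> sum d^2 f / dX_ij dX_kl U_ij V_kl = d/ds d/dt f(X + sU + tV) at 0. *)
Definition hessian (n r : nat) (f : 'M[R]_(n, r) -> R) (X U V : 'M[R]_(n, r)) : R :=
  derive1 (fun s : R => derive1 (fun t : R => f (X + s *: U + t *: V)) 0) 0.

Definition hessian_eigenvalue (n r : nat) (f : 'M[R]_(n, r) -> R)
  (X : 'M[R]_(n, r)) (lam : R) : Prop :=
  exists2 U : 'M[R]_(n, r), U != 0 &
    forall V : 'M[R]_(n, r), hessian f X U V = lam * frob_inner U V.

Definition second_order_critical (n r : nat) (f : 'M[R]_(n, r) -> R)
  (X : 'M[R]_(n, r)) : Prop :=
  first_order_critical f X /\ forall U, 0 <= hessian f X U U.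

Definition strict_saddle (n r : nat) (f : 'M[R]_(n, r) -> R)
  (X : 'M[R]_(n, r)) : Prop :=
  first_order_critical f X /\ exists lam, hessian_eigenvalue f X lam /\ lam < 0.

Definition sorted_spectrum (k : nat) (A : 'M[R]_k) (s : seq R) : Prop :=
  sorted (fun x y : R => y <= x) s /\ char_poly A = \prod_(x <- s) ('X - x%:P).

Lemma seqR_inhabited : inhabited (seq R). Proof. exact: (inhabits [::]). Qed.

Definition sing_vals_sq (n r : nat) (X : 'M[R]_(n, r)) : seq R :=
  epsilon seqR_inhabited (sorted_spectrum (X^T *m X)).

(* k-th largest singular value sigma_k(X), k >= 1 *)
Definition sing_val (n r : nat) (k : nat) (X : 'M[R]_(n, r)) : R :=
  Num.sqrt (nth 0 (sing_vals_sq X) k.-1).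

End Defs.

From HB Require Import structures.
From mathcomp Require Import all_boot all_order all_algebra.
From mathcomp Require Import all_classical all_reals all_analysis.
From mathcomp Require Import complex ring lra.
From Stdlib Require Import ClassicalEpsilon.
Set Implicit Arguments. Unset Strict Implicit. Unset Printing Implicit Defensive.
Import Order.TTheory GRing.Theory Num.Theory.
Local Open Scope ring_scope.

(* Let E = A(X X^T) - b be the residual at the critical point X.  Criticality
   means <E, A(X U^T + U X^T)> = 0 for all U; taking U = X gives
   <E, A(Ms)> = -|E|^2 <= -(1 - delta) |X X^T - Ms|_F^2 by RIP.
   Let lam be the least eigenvalue of the Hessian form, so that
   lam |W|_F^2 <= Hess[W, W].  For W = z v^T with X^T X v = sigma_r^2 v, the
   matrix X W^T + W X^T has rank at most two, and RIP turns the Rayleigh bound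
   into lam |z|^2 <= 4 (1 + delta) sigma_r^2 |z|^2 + 2 <E, A(z z^T)>.  Both
   sides are linear in z z^T, so the inequality passes to a Gram decomposition
   Ms = sum_i z_i z_i^T of the PSD target and yields
   lam tr Ms <= 4 (1 + delta) sigma_r^2 tr Ms - 2 (1 - delta) |X X^T - Ms|_F^2.
   So lam is at most twice the claimed bound, which the gap hypothesis makes
   negative. *)

Lemma char_poly_similar (F : comNzRingType) N (Q P A : 'M[F]_N) :
  Q *m P = 1%:M -> char_poly (Q *m A *m P) = char_poly A.
Proof.
move=> QP; rewrite /char_poly /char_poly_mx.
have QPc : map_mx polyC Q *m map_mx polyC P = 1%:M by rewrite -map_mxM QP map_mx1.
have -> : 'X%:M - map_mx polyC (Q *m A *m P) =
    map_mx polyC Q *m ('X%:M - map_mx polyC A) *m map_mx polyC P.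
  by rewrite mulmxBr mulmxBl mul_mx_scalar -scalemxAl QPc scalemx1 !map_mxM.
by rewrite !det_mulmx mulrAC -det_mulmx QPc det1 mul1r.
Qed.

Lemma char_poly_root_eigenvector (F : fieldType) N (S : 'M[F]_N)
    (I : eqType) (r : seq I) (e : I -> F) i :
  char_poly S = \prod_(j <- r) ('X - (e j)%:P) -> i \in r ->
  exists2 u : 'rV_N, u != 0 & u *m S = e i *: u.
Proof.
move=> HS ir; have : eigenvalue S (e i).
  by rewrite eigenvalue_root_char HS -(big_map e xpredT (fun y => 'X - y%:P))
    root_prod_XsubC map_f.
by case/eigenvalueP => u Su unz; exists u.
Qed.

Lemma quad_form_diag (F : comNzRingType) p N (w : 'rV[F]_p) (a b : 'M[F]_(N, p)) d :
  (w *m (a^T *m diag_mx d *m a + b^T *m diag_mx d *m b) *m w^T) 0 0 =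
  \sum_j d 0 j * ((w *m a^T) 0 j ^+ 2 + (w *m b^T) 0 j ^+ 2).
Proof.
have quad c : (w *m (c^T *m diag_mx d *m c) *m w^T) 0 0 =
    \sum_j d 0 j * (w *m c^T) 0 j ^+ 2.
  rewrite !mulmxA -(mulmxA _ c) -[c *m w^T]trmxK trmx_mul trmxK mxE.
  by apply: eq_bigr => j _; rewrite mul_mx_diag !mxE; ring.
rewrite mulmxDr mulmxDl mxE !quad -big_split.
by apply: eq_bigr => j _; rewrite mulrDr.
Qed.

Lemma row_norm2_gt0 (F : realDomainType) N (u : 'rV[F]_N) :
  u != 0 -> 0 < (u *m u^T) 0 0.
Proof.
move=> unz; rewrite mxE lt_def sumr_ge0 ?andbT => [|j _]; last first.
  by rewrite mxE -expr2 sqr_ge0.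
apply: contra unz; rewrite psumr_eq0 => [/allP u0|j _]; last first.
  by rewrite mxE -expr2 sqr_ge0.
apply/eqP/rowP => j; have /eqP := u0 j (mem_index_enum j).
by rewrite !mxE -expr2 => /eqP; rewrite sqrf_eq0 => /eqP.
Qed.

Definition symprod (F : pzRingType) p q (X U : 'M[F]_(p, q)) : 'M[F]_p :=
  X *m U^T + U *m X^T.

Lemma symprodC (F : pzRingType) p q (X U : 'M[F]_(p, q)) : symprod X U = symprod U X.
Proof. exact: addrC. Qed.

Lemma symprod_linear (F : comNzRingType) p q (V : 'M[F]_(p, q)) :
  linear (fun U : 'M[F]_(p, q) => symprod U V).
Proof.
move=> a U1 U2; rewrite /symprod linearD linearZ /= mulmxDl mulmxDr -scalemxAl -scalemxAr.
by rewrite scalerDr addrACA.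
Qed.

Lemma symprod_shift (F : comNzRingType) p q (X U V : 'M[F]_(p, q)) s :
  symprod (X + s *: U) V = symprod X V + s *: symprod U V.
Proof. by rewrite addrC [LHS]symprod_linear addrC. Qed.

Lemma mxrank_symprod (F : fieldType) p q (X U : 'M[F]_(p, q)) :
  (\rank (symprod X U) <= q + q)%N.
Proof.
apply: leq_trans (mxrank_add _ _) _.
by apply: leq_add; apply: leq_trans (mxrankM_maxl _ _) (rank_leq_col _).
Qed.

Lemma scalar_mxvec_expand (F : comNzRingType) p q (h : 'M[F]_(p, q) -> F) :
  scalar h -> forall U, h U = \sum_k mxvec U 0 k * h (vec_mx (delta_mx 0 k)).
Proof.
move=> hlin U.
pose hL : {scalar 'M[F]_(p, q)} := HB.pack h (GRing.isLinear.Build _ _ _ _ h hlin).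
rewrite -[h U]/(hL U) -{1}[U]mxvecK {1}[mxvec U]matrix_sum_delta big_ord1 !linear_sum.
by apply: eq_bigr => k _; rewrite linearZ; exact: scalarZ.
Qed.

Section RealSymmetric.
Variable R : rcfType.
Local Notation Re := (map_mx (@complex.Re R)).
Local Notation Im := (map_mx (@complex.Im R)).

Lemma Re_mulmx_diag p N q (A : 'M[R[i]]_(p, N)) (B : 'M[R[i]]_(N, q)) (d : 'rV[R]_N) :
  Re (A *m diag_mx (map_mx (real_complex R) d) *m B) =
  Re A *m diag_mx d *m Re B - Im A *m diag_mx d *m Im B.
Proof.
apply/matrixP => i k; rewrite !mxE -sumrB.
rewrite (raddf_sum (@complex.Re R : Rcomplex R -> R)).
apply: eq_bigr => j _; rewrite !mul_mx_diag !mxE.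
by case: (A i j) => a1 a2; case: (B j k) => b1 b2 /=; ring.
Qed.

(* Take real parts in the unitary diagonalisation S = P^* D P over R[i]:
   D is real, and P = a + i b. *)
Lemma real_sym_spectral N (S : 'M[R]_N) : S^T = S ->
  exists (d : 'rV[R]_N) (a b : 'M[R]_N),
  [/\ S = a^T *m diag_mx d *m a + b^T *m diag_mx d *m b,
      a^T *m a + b^T *m b = 1%:M &
      char_poly S = \prod_(j < N) ('X - (d 0 j)%:P)].
Proof.
move=> Ssym; pose Sc := map_mx (real_complex R) S.
have Sc_herm : Sc \is hermsymmx.
  apply: realsym_hermsym.
    by apply/is_hermitianmxP; rewrite expr0 scale1r map_mx_id // /Sc map_trmx Ssym.
  by apply/mxOverP => i j; rewrite mxE; apply/complex_realP; exists (S i j).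
have /orthomx_spectralP HSc := hermitian_normalmx Sc_herm.
set P := spectralmx Sc in HSc; set D := spectral_diag Sc in HSc.
have Pu : P \in unitmx := spectral_unit Sc.
have PiP : invmx P = map_mx Num.conj P^T := invmx_unitary (spectral_unitarymx Sc).
have ReP' : Re (map_mx Num.conj P^T) = (Re P)^T.
  by apply/matrixP => i j; rewrite !mxE; case: (P j i).
have ImP' : Im (map_mx Num.conj P^T) = - (Im P)^T.
  by apply/matrixP => i j; rewrite !mxE; case: (P j i).
have DRe : D = map_mx (real_complex R) (Re D).
  apply/matrixP => i j; have /mxOverP/(_ i j) := hermitian_spectral_diag_real Sc_herm.
  by rewrite !mxE => /complex_realP [k ->].
have Re_conj e : Re (invmx P *m diag_mx (map_mx (real_complex R) e) *m P) =
    (Re P)^T *m diag_mx e *m Re P + (Im P)^T *m diag_mx e *m Im P.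
  by rewrite PiP Re_mulmx_diag ReP' ImP' !mulNmx opprK.
exists (Re D), (Re P), (Im P); split.
- have -> : S = Re Sc by apply/matrixP => i j; rewrite !mxE.
  by rewrite HSc {1}DRe Re_conj.
- have := Re_conj (const_mx 1); rewrite diag_const_mx !mulmx1.
  have -> : map_mx (real_complex R) (const_mx 1) = const_mx 1 :> 'rV_N.
    by apply/matrixP => i j; rewrite !mxE.
  rewrite diag_const_mx mulmx1 mulVmx // => <-.
  by apply/matrixP => i j; rewrite !mxE; case: (i == j).
apply: (@map_poly_inj _ _ (real_complex R)).
rewrite map_char_poly -/Sc HSc char_poly_similar; last by rewrite mulVmx.
rewrite char_poly_trig ?diag_mx_is_trig // rmorph_prod; apply: eq_bigr => j _.
by rewrite rmorphB /= map_polyX map_polyC /= !mxE eqxx mulr1n {1}DRe !mxE.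
Qed.

Lemma real_sym_min_eigen N (S : 'M[R]_N) : (0 < N)%N -> S^T = S ->
  exists lam, (exists2 u : 'rV_N, u != 0 & u *m S = lam *: u) /\
    forall w : 'rV_N, lam * (w *m w^T) 0 0 <= (w *m S *m w^T) 0 0.
Proof.
move=> N_gt0 Ssym; have [d [a [b [HS Hab Hc]]]] := real_sym_spectral Ssym.
have [j0 _ dmin] := @arg_minP _ _ 'I_N (Ordinal N_gt0) xpredT (fun j => d 0 j) isT.
exists (d 0 j0); split; first exact: char_poly_root_eigenvector Hc (mem_index_enum j0).
move=> w; have -> : (w *m w^T) 0 0 = (w *m (a^T *m diag_mx (const_mx 1) *m a
    + b^T *m diag_mx (const_mx 1) *m b) *m w^T) 0 0.
  by rewrite diag_const_mx !mulmx1 Hab mulmx1.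
rewrite HS !quad_form_diag.
rewrite mulr_sumr; apply: ler_sum => j _; rewrite mxE mul1r.
by apply: ler_wpM2r; [rewrite addr_ge0 ?sqr_ge0 | exact: dmin].
Qed.

Lemma psd_gram N (S : 'M[R]_N) : S^T = S ->
  (forall v : 'cV_N, 0 <= (v^T *m S *m v) 0 0) ->
  exists zs : seq 'cV[R]_N, S = \sum_(z <- zs) z *m z^T.
Proof.
move=> Ssym Spsd; have [d [a [b [HS _ Hc]]]] := real_sym_spectral Ssym.
have d_ge0 j : 0 <= d 0 j.
  have [u unz Su] := char_poly_root_eigenvector Hc (mem_index_enum j).
  have := Spsd u^T; rewrite trmxK Su -scalemxAl mxE.
  by rewrite pmulr_lge0 // row_norm2_gt0.
pose g (c : 'M[R]_N) j := Num.sqrt (d 0 j) *: (row j c)^T.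
have gram c : c^T *m diag_mx d *m c = \sum_j g c j *m (g c j)^T.
  apply/matrixP => i k; rewrite summxE mxE; apply: eq_bigr => j _.
  rewrite mul_mx_diag !mxE !big_ord1 !mxE mulrACA -expr2 sqr_sqrtr //; ring.
exists (map (g a) (index_enum 'I_N) ++ map (g b) (index_enum 'I_N)).
by rewrite big_cat !big_map HS !gram.
Qed.

End RealSymmetric.

Section Frobenius.
Variable R : realType.

Lemma frob_innerE p q (A B : 'M[R]_(p, q)) :
  frob_inner A B = \sum_i \sum_j A i j * B i j.
Proof.
rewrite /frob_inner /mxtrace exchange_big; apply: eq_bigr => j _.
by rewrite mxE; apply: eq_bigr => i _; rewrite mxE.
Qed.

Lemma frob_innerC p q (A B : 'M[R]_(p, q)) : frob_inner A B = frob_inner B A.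
Proof. by rewrite /frob_inner -mxtrace_tr trmx_mul trmxK. Qed.

Lemma frob_innerDr p q (A B C : 'M[R]_(p, q)) :
  frob_inner A (B + C) = frob_inner A B + frob_inner A C.
Proof. by rewrite /frob_inner mulmxDr mxtraceD. Qed.

Lemma frob_innerZr p q (c : R) (A B : 'M[R]_(p, q)) :
  frob_inner A (c *: B) = c * frob_inner A B.
Proof. by rewrite /frob_inner -scalemxAr mxtraceZ. Qed.

Lemma frob_innerDl p q (A B C : 'M[R]_(p, q)) :
  frob_inner (A + B) C = frob_inner A C + frob_inner B C.
Proof. by rewrite frob_innerC frob_innerDr !(frob_innerC C). Qed.

Lemma frob_innerZl p q (c : R) (A B : 'M[R]_(p, q)) :
  frob_inner (c *: A) B = c * frob_inner A B.
Proof. by rewrite frob_innerC frob_innerZr frob_innerC. Qed.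

Lemma frob_inner_mxvec p q (A B : 'M[R]_(p, q)) :
  frob_inner A B = (mxvec A *m (mxvec B)^T) 0 0.
Proof.
rewrite frob_innerE mxE (reindex _ (curry_mxvec_bij _ _)) /= pair_bigA.
by apply: eq_bigr => -[i j] _; rewrite !mxE !mxvecE.
Qed.

Lemma frob_norm2E p q (A : 'M[R]_(p, q)) :
  frob_norm2 A = \sum_i \sum_j A i j ^+ 2.
Proof.
by rewrite /frob_norm2 frob_innerE; under eq_bigr do under eq_bigr do rewrite -expr2.
Qed.

Lemma frob_norm2_ge0 p q (A : 'M[R]_(p, q)) : 0 <= frob_norm2 A.
Proof.
by rewrite frob_norm2E sumr_ge0 // => i _; rewrite sumr_ge0 // => j _; rewrite sqr_ge0.
Qed.

Lemma frob_norm2_gt0 p q (A : 'M[R]_(p, q)) : A != 0 -> 0 < frob_norm2 A.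
Proof.
move=> Anz; rewrite /frob_norm2 frob_inner_mxvec row_norm2_gt0 //.
by apply: contra Anz => /eqP A0; rewrite -[A]mxvecK A0 linear0.
Qed.

Lemma frob_norm2_eq0 p q (A : 'M[R]_(p, q)) : (frob_norm2 A == 0) = (A == 0).
Proof.
apply/idP/idP => [|/eqP ->]; last by rewrite /frob_norm2 /frob_inner mulmx0 mxtrace0.
by apply: contraLR => /frob_norm2_gt0 /lt0r_neq0.
Qed.

Lemma norm2sq_frob m (v : 'cV[R]_m) : norm2sq v = frob_norm2 v.
Proof. by rewrite frob_norm2E; apply: eq_bigr => i _; rewrite big_ord1. Qed.

Lemma frob_norm2_col m (v : 'cV[R]_m) : frob_norm2 v = (v^T *m v) 0 0.
Proof. by rewrite /frob_norm2 /frob_inner /mxtrace big_ord1. Qed.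

Lemma frob_norm2_outer p q (x : 'cV[R]_p) (y : 'cV[R]_q) :
  frob_norm2 (x *m y^T) = frob_norm2 x * frob_norm2 y.
Proof.
rewrite !frob_norm2E big_distrl; apply: eq_bigr => i _.
rewrite big_ord1 big_distrr; apply: eq_bigr => j _.
by rewrite big_ord1 !mxE big_ord1 !mxE exprMn.
Qed.

Lemma frob_norm2D_le p q (A B : 'M[R]_(p, q)) :
  frob_norm2 (A + B) <= 2 * (frob_norm2 A + frob_norm2 B).
Proof.
rewrite !frob_norm2E -big_split /= mulr_sumr ler_sum // => i _.
rewrite -big_split /= mulr_sumr ler_sum // => j _; rewrite mxE.
by have := sqr_ge0 (A i j - B i j); nra.
Qed.

Lemma sym_bilinear_min_eigen p q (B : 'M[R]_(p, q) -> 'M[R]_(p, q) -> R) :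
  (0 < p * q)%N -> (forall V, scalar (B^~ V)) -> (forall U V, B U V = B V U) ->
  exists lam, (exists2 U0, U0 != 0 & forall V, B U0 V = lam * frob_inner U0 V) /\
    forall W, lam * frob_norm2 W <= B W W.
Proof.
move=> pq_gt0 Blin Bsym.
pose e k : 'M[R]_(p, q) := vec_mx (delta_mx 0 k).
pose H := \matrix_(k, l) B (e k) (e l).
have BH U V : B U V = (mxvec U *m H *m (mxvec V)^T) 0 0.
  rewrite (scalar_mxvec_expand (Blin V)) -mulmxA mxE; apply: eq_bigr => k _.
  rewrite Bsym (scalar_mxvec_expand (Blin _)) mxE; congr (_ * _).
  by apply: eq_bigr => l _; rewrite !mxE Bsym mulrC.
have Hsym : H^T = H by apply/matrixP => k l; rewrite !mxE Bsym.
have [lam [[u unz Hu] Hmin]] := real_sym_min_eigen pq_gt0 Hsym.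
exists lam; split=> [|W]; last by rewrite BH /frob_norm2 frob_inner_mxvec.
exists (vec_mx u) => [|V].
  by apply: contra unz => /eqP u0; rewrite -[u]vec_mxK u0 linear0.
by rewrite BH frob_inner_mxvec vec_mxK Hu -scalemxAl mxE.
Qed.

End Frobenius.

Section PositiveSemidefinite.
Variable R : realType.

Lemma psd_scalar_ge0 N (S : 'M[R]_N) (phi : 'M[R]_N -> R) :
  psd S -> scalar phi -> (forall z : 'cV_N, 0 <= phi (z *m z^T)) -> 0 <= phi S.
Proof.
move=> [Ssym Spsd] philin phi_ge0; have [zs ->] := psd_gram Ssym Spsd.
pose phiL : {scalar 'M[R]_N} :=
  HB.pack phi (GRing.isLinear.Build _ _ _ _ phi philin).
by rewrite -[phi _]/(phiL _) linear_sum sumr_ge0.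
Qed.

Lemma psd_trace_gt0 N (S : 'M[R]_N) : psd S -> S != 0 -> 0 < \tr S.
Proof.
move=> [Ssym Spsd] Snz; have [zs Szs] := psd_gram Ssym Spsd.
have trE : \tr S = \sum_(z <- zs) frob_norm2 z.
  by rewrite Szs raddf_sum /=; apply: eq_bigr => z _; rewrite mxtrace_mulC.
rewrite trE lt_def sumr_ge0 ?andbT => [|z _]; last exact: frob_norm2_ge0.
apply: contra Snz; rewrite psumr_eq0 => [/allP z0|z _]; last exact: frob_norm2_ge0.
rewrite Szs big_seq big1 // => z /z0; rewrite frob_norm2_eq0 => /eqP ->.
by rewrite mul0mx.
Qed.

Lemma sorted_spectrum_exists N (S : 'M[R]_N) :
  S^T = S -> exists s, sorted_spectrum S s.
Proof.
move=> Ssym; have [d [a [b [_ _ Hc]]]] := real_sym_spectral Ssym.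
exists (sort (fun x y : R => y <= x) (map (fun j => d 0 j) (index_enum 'I_N))); split.
  by apply: sort_sorted => x y; exact: le_total.
by rewrite Hc (perm_big _ (permEl (perm_sort _ _))) big_map.
Qed.

Lemma sing_val_eigenvector n r (X : 'M[R]_(n, r)) : (0 < r)%N ->
  exists2 v : 'cV[R]_r, v != 0 & X^T *m X *m v = sing_val r X ^+ 2 *: v.
Proof.
move=> r_gt0; have XXsym : (X^T *m X)^T = X^T *m X by rewrite trmx_mul trmxK.
have [_ Hc] : sorted_spectrum (X^T *m X) (sing_vals_sq X).
  by apply: epsilon_spec; exact: sorted_spectrum_exists.
have size_s : size (sing_vals_sq X) = r.
  by have := size_char_poly (X^T *m X); rewrite Hc size_prod_XsubC => -[].
have r1_in : (r.-1 < size (sing_vals_sq X))%N by rewrite size_s prednK.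
have [u unz Hu] := char_poly_root_eigenvector (e := id) Hc (mem_nth 0 r1_in).
set x := nth 0 _ _ in Hu.
have x_ge0 : 0 <= x.
  have : 0 <= frob_norm2 (X *m u^T) := frob_norm2_ge0 _.
  rewrite frob_norm2_col trmx_mul trmxK !mulmxA -(mulmxA u) Hu -scalemxAl mxE.
  by rewrite pmulr_lge0 // row_norm2_gt0.
exists u^T; first by rewrite trmx_eq0.
by rewrite /sing_val -/x sqr_sqrtr // -XXsym -trmx_mul Hu linearZ.
Qed.

End PositiveSemidefinite.

Section Calculus.
Variable R : realType.

Lemma is_derive0_horner (P : {poly R}) : is_derive (0 : R) (1 : R) (horner P) P`_1.
Proof. by have := is_derive_poly P 0; rewrite horner_coef0 coef_deriv mulr1n. Qed.

Lemma derive1_val (g : R -> R) x dg : is_derive x (1 : R) g dg -> derive1 g x = dg.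
Proof. by move=> gx; rewrite derive1E (derive_val (is_derive := gx)). Qed.

Lemma frob_inner_quadratic_poly p q (A0 A1 A2 B0 B1 B2 : 'M[R]_(p, q)) :
  exists P : {poly R},
    (forall t, frob_inner (A0 + t *: A1 + t ^+ 2 *: A2) (B0 + t *: B1 + t ^+ 2 *: B2)
               = P.[t])
    /\ P`_1 = frob_inner A0 B1 + frob_inner A1 B0.
Proof.
pose coef (A B C : 'M[R]_(p, q)) i j := Poly [:: A i j; B i j; C i j].
exists (\sum_i \sum_j coef A0 A1 A2 i j * coef B0 B1 B2 i j); split=> [t|].
  rewrite frob_innerE horner_sum; apply: eq_bigr => i _.
  rewrite horner_sum; apply: eq_bigr => j _.
  by rewrite hornerM !horner_Poly !mxE /=; ring.
rewrite !frob_innerE coef_sum -big_split; apply: eq_bigr => i _.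
rewrite coef_sum -big_split; apply: eq_bigr => j _ /=.
by rewrite coefM !big_ord_recr big_ord0 !coef_Poly /=; ring.
Qed.

Lemma is_derive_frob_inner_quadratic p q (c : R) (A0 A1 A2 B0 B1 B2 : 'M[R]_(p, q)) :
  is_derive (0 : R) (1 : R)
    (fun t => c * frob_inner (A0 + t *: A1 + t ^+ 2 *: A2) (B0 + t *: B1 + t ^+ 2 *: B2))
    (c * (frob_inner A0 B1 + frob_inner A1 B0)).
Proof.
have [P [PE P1]] := frob_inner_quadratic_poly A0 A1 A2 B0 B1 B2.
rewrite (_ : (fun t => _) = horner (c *: P)); last first.
  by apply/funext => t; rewrite hornerZ PE.
by rewrite -P1 -coefZ; exact: is_derive0_horner.
Qed.

End Calculus.

Section Objective.
Variables (R : realType) (n r m : nat) (As : 'I_m -> 'M[R]_n) (b : 'cV[R]_m).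
Local Notation f := (@fobj R m n r As b).

Lemma meas_op_is_linear : linear (meas_op As).
Proof.
move=> c M1 M2; apply/matrixP => i j.
by rewrite !mxE /frob_inner mulmxDr -scalemxAr mxtraceD mxtraceZ.
Qed.

HB.instance Definition _ :=
  GRing.isLinear.Build R 'M[R]_n 'cV[R]_m _ (meas_op As) meas_op_is_linear.

Definition residual (X : 'M[R]_(n, r)) : 'cV[R]_m := meas_op As (X *m X^T) - b.

Lemma fobjE X : f X = 2^-1 * frob_norm2 (residual X).
Proof. by rewrite /fobj norm2sq_frob. Qed.

Lemma residual_shift X V t : residual (X + t *: V) =
  residual X + t *: meas_op As (symprod X V) + t ^+ 2 *: meas_op As (V *m V^T).
Proof.
rewrite /residual /symprod linearD linearZ /= mulmxDl !mulmxDr -!scalemxAl -!scalemxAr.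
rewrite scalerA -expr2 !linearD !linearZ /=.
by rewrite addrAC !addrA (addrAC (meas_op As (X *m X^T))).
Qed.

Lemma is_derive_fobj_shift X V :
  is_derive (0 : R) (1 : R) (fun t => f (X + t *: V))
    (frob_inner (residual X) (meas_op As (symprod X V))).
Proof.
rewrite (_ : (fun t => _) = fun t => 2^-1 * frob_inner
    (residual X + t *: meas_op As (symprod X V) + t ^+ 2 *: meas_op As (V *m V^T))
    (residual X + t *: meas_op As (symprod X V) + t ^+ 2 *: meas_op As (V *m V^T))).
  apply: (is_derive_eq (is_derive_frob_inner_quadratic _ _ _ _ _ _ _)).
  by rewrite [frob_inner (meas_op _ _) _]frob_innerC; lra.
by apply/funext => t; rewrite fobjE residual_shift.
Qed.

Lemma critical_residual_orth X : first_order_critical f X ->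
  forall U, frob_inner (residual X) (meas_op As (symprod X U)) = 0.
Proof.
move=> crit U.
by rewrite -(derive1_val (is_derive_fobj_shift X U)) (derive1_val (crit U)).
Qed.

Lemma hessianE X U V : hessian f X U V =
  frob_inner (meas_op As (symprod X U)) (meas_op As (symprod X V))
  + frob_inner (residual X) (meas_op As (symprod U V)).
Proof.
rewrite /hessian (_ : (fun s => _) = fun s => 1 * frob_inner
    (residual X + s *: meas_op As (symprod X U) + s ^+ 2 *: meas_op As (U *m U^T))
    (meas_op As (symprod X V) + s *: meas_op As (symprod U V) + s ^+ 2 *: 0)).
  by rewrite (derive1_val (is_derive_frob_inner_quadratic _ _ _ _ _ _ _)) mul1r addrC.
apply/funext => s; rewrite (derive1_val (is_derive_fobj_shift _ _)).
rewrite residual_shift scaler0 addr0 mul1r symprod_shift.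
by rewrite [meas_op As (symprod X V + _)]linearD linearZ.
Qed.

Lemma hessian_sym X U V : hessian f X U V = hessian f X V U.
Proof. by rewrite !hessianE frob_innerC (symprodC U V). Qed.

Lemma hessian_scalar X V : scalar (fun U => hessian f X U V).
Proof.
move=> a U1 U2 /=; rewrite !hessianE; set E := residual X.
have -> : symprod X (a *: U1 + U2) = a *: symprod X U1 + symprod X U2.
  by rewrite !(symprodC X) symprod_linear.
rewrite [symprod (_ + _) V]symprod_linear !linearP /=.
by rewrite frob_innerDl frob_innerZl !frob_innerDr !frob_innerZr mulrDr addrACA.
Qed.

Lemma hessian_min_eigen X : (0 < n * r)%N ->
  exists lam, hessian_eigenvalue f X lam /\
    forall W, lam * frob_norm2 W <= hessian f X W W.
Proof.
move=> nr_gt0.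
exact: (sym_bilinear_min_eigen nr_gt0 (hessian_scalar X) (hessian_sym X)).
Qed.

Lemma critical_residual_target X : first_order_critical f X ->
  frob_inner (residual X) b = - frob_norm2 (residual X).
Proof.
move=> crit; set E := residual X.
have orth : frob_inner E (meas_op As (X *m X^T)) = 0.
  by have := critical_residual_orth crit X; rewrite /symprod linearD frob_innerDr; lra.
have -> : b = meas_op As (X *m X^T) + (-1) *: E by rewrite scaleN1r opprB addrC subrK.
by rewrite frob_innerDr frob_innerZr orth add0r mulN1r.
Qed.

End Objective.

Section StrictSaddle.
Variables (R : realType) (n r m p : nat) (As : 'I_m -> 'M[R]_n) (Ms : 'M[R]_n).
Variables (delta : R) (X : 'M[R]_(n, r)) (lam mu : R) (v : 'cV[R]_r).
Local Notation b := (meas_op As Ms).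
Local Notation f := (@fobj R m n r As b).
Hypotheses (delta_ge0 : 0 <= delta) (rip : RIP As p delta) (p_ge2 : (2 <= p)%N).
Hypothesis crit : first_order_critical f X.
Hypothesis lam_min : forall W, lam * frob_norm2 W <= hessian f X W W.
Hypotheses (v_nz : v != 0) (Xv : X^T *m X *m v = mu *: v).

Lemma hessian_rank_one_bound (z : 'cV[R]_n) :
  lam * frob_norm2 z <= 4 * (1 + delta) * mu * frob_norm2 z
                        + 2 * frob_inner (residual As b X) (meas_op As (z *m z^T)).
Proof.
set x := X *m v; set W := z *m v^T; set nu := frob_norm2 v.
have nu_gt0 : 0 < nu := frob_norm2_gt0 v_nz.
have x_norm : frob_norm2 x = mu * nu.
  by rewrite /nu !frob_norm2_col trmx_mul -mulmxA (mulmxA X^T) Xv -scalemxAr mxE.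
have sXW : symprod X W = symprod x z by rewrite /symprod /x /W !trmx_mul trmxK !mulmxA.
have sWW : symprod W W = (2 * nu) *: (z *m z^T).
  have WW : W *m W^T = nu *: (z *m z^T).
    rewrite trmx_mul trmxK mulmxA -(mulmxA z) [v^T *m v]mx11_scalar -frob_norm2_col.
    by rewrite mul_mx_scalar scalemxAl.
  by rewrite /symprod WW -scalerDl mulr2n mulrDl mul1r.
have xz_bound : frob_norm2 (meas_op As (symprod x z))
    <= (1 + delta) * (4 * mu * nu * frob_norm2 z).
  have [_ rip_up] := rip (leq_trans (mxrank_symprod x z) p_ge2).
  rewrite -norm2sq_frob (le_trans rip_up) // ler_wpM2l ?addr_ge0 //.
  apply: le_trans (frob_norm2D_le _ _) _.
  by rewrite frob_norm2_outer [frob_norm2 (z *m _)]frob_norm2_outer x_norm; lra.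
have := lam_min W.
rewrite hessianE sXW sWW linearZ frob_innerZr frob_norm2_outer -/nu.
rewrite -[frob_inner (meas_op _ _) _]/(frob_norm2 _); set L := frob_inner _ _.
by move=> H; rewrite -(ler_pM2r nu_gt0); lra.
Qed.

Lemma hessian_trace_bound : psd Ms -> (r + \rank Ms <= p)%N ->
  lam * \tr Ms <= 4 * (1 + delta) * mu * \tr Ms
                  - 2 * (1 - delta) * frob_norm2 (X *m X^T - Ms).
Proof.
move=> Ms_psd rank_le; set E := residual As b X.
have rip_E : (1 - delta) * frob_norm2 (X *m X^T - Ms) <= frob_norm2 E.
  have rank_XM : (\rank (X *m X^T - Ms)%R <= p)%N.
    apply: leq_trans (mxrank_add _ _) _; rewrite mxrank_opp (leq_trans _ rank_le) //.
    by rewrite leq_add2r (leq_trans (mxrankM_maxl _ _) (rank_leq_col _)).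
  by have [] := rip rank_XM; rewrite /E /residual -linearB norm2sq_frob.
pose phi M := (4 * (1 + delta) * mu - lam) * \tr M + 2 * frob_inner E (meas_op As M).
have phi_lin : scalar phi.
  move=> a M1 M2; rewrite /phi !linearP /= frob_innerDr frob_innerZr.
  by move: (\tr M1) (\tr M2) (frob_inner E _) (frob_inner E _) => t1 t2 e1 e2; ring.
have rank_one (z : 'cV[R]_n) : 0 <= phi (z *m z^T).
  rewrite /phi mxtrace_mulC -[\tr (z^T *m z)]/(frob_norm2 z).
  by have := hessian_rank_one_bound z; lra.
have := psd_scalar_ge0 Ms_psd phi_lin rank_one.
by rewrite /phi critical_residual_target //; lra.
Qed.

End StrictSaddle.

Theorem theorem1 (R : realType) (n r rs m : nat)
  (As : 'I_m -> 'M[R]_n) (Ms : 'M[R]_n) (delta : R) (Xh : 'M[R]_(n, r)) :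
  (1 <= rs)%N -> (rs <= r)%N -> (r <= n)%N ->
  (forall i, sym_matrix (As i)) ->
  psd Ms -> Ms != 0 -> \rank Ms = rs ->
  0 <= delta -> delta < 1 ->
  RIP As (r + rs) delta ->
  first_order_critical (fobj As (meas_op As Ms)) Xh ->
  frob_norm2 (Xh *m Xh^T - Ms) >
    2 * ((1 + delta) / (1 - delta)) * \tr Ms * (sing_val r Xh) ^+ 2 ->
  ~ second_order_critical (fobj As (meas_op As Ms)) Xh /\
  strict_saddle (fobj As (meas_op As Ms)) Xh /\
  exists lam : R,
    hessian_eigenvalue (fobj As (meas_op As Ms)) Xh lam /\ lam < 0 /\
    lam <= 2 * (1 + delta) * (sing_val r Xh) ^+ 2
           - (1 - delta) * frob_norm2 (Xh *m Xh^T - Ms) / \tr Ms.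
Proof.
move=> rs_gt0 rs_le_r r_le_n _ Ms_psd Ms_nz Ms_rank delta_ge0 delta_lt1 rip crit gap.
subst rs.
have r_gt0 : (0 < r)%N := leq_trans rs_gt0 rs_le_r.
have nr_gt0 : (0 < n * r)%N by rewrite muln_gt0 r_gt0 (leq_trans r_gt0 r_le_n).
have [lam [lam_eig lam_min]] := hessian_min_eigen As (meas_op As Ms) Xh nr_gt0.
have [v v_nz Xv] := sing_val_eigenvector Xh r_gt0.
have := @hessian_trace_bound R n r m (r + \rank Ms) As Ms delta Xh lam _ v
  delta_ge0 rip (leq_add r_gt0 rs_gt0) crit lam_min v_nz Xv Ms_psd (leqnn _).
have T_gt0 := psd_trace_gt0 Ms_psd Ms_nz.
move: gap; set mu := _ ^+ 2; set F := frob_norm2 _; set T := \tr Ms => gap bound.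
have gapG : 2 * (1 + delta) * mu < (1 - delta) * F / T.
  have delta_gt : 0 < 1 - delta by rewrite subr_gt0.
  have -> : 2 * (1 + delta) * mu =
      (1 - delta) * (2 * ((1 + delta) / (1 - delta)) * T * mu) / T.
    by field; rewrite !lt0r_neq0.
  by rewrite ltr_pM2r ?invr_gt0 // ltr_pM2l.
have lam_le : lam <= 2 * (2 * (1 + delta) * mu - (1 - delta) * F / T).
  rewrite -(ler_pM2r T_gt0) (le_trans bound) // le_eqVlt; apply/orP; left.
  by apply/eqP; field; rewrite lt0r_neq0.
have lam_lt0 : lam < 0 by lra.
have [U0 U0_nz U0_eig] := lam_eig.
split.
  case=> _ /(_ U0); rewrite U0_eig.
  by rewrite pmulr_lge0 ?frob_norm2_gt0 // leNgt lam_lt0.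
by split; [split=> //; exists lam | exists lam; split=> //; split=> //; lra].
Qed.
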